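(* Let $R$ be the holistic system robustness random variable (defined in the context), with distribution $\pi_R$, so that $\mathbb{P}_{\pi_R}[-R\le a]=1$. Let $\epsilon\in(0,1)$, $\gamma\in[0,1)$, $\alpha\in(0,1]$, and define \[ L(x,\mu,t)=t\left(\mu+e^{\frac{x}{t}-\mu-\ln(\alpha)-1}\right),\qquad u_b(\mu,t)=L(a,\mu,t). \] Let $r_1,\dots,r_N$ be independent samples of $R$ with $N\ge\frac{\log(1-\gamma)}{\log(1-\epsilon)}$, and $\zeta^*_N(\mu,t)=\max_{1\le k\le N}L(-r_k,\mu,t)$. Then \[ \mathbb{P}^N_{\pi_R}\left[r^*_E\triangleq\inf_{\mu\in\mathbb{R},\ t>0}\zeta^*_N(\mu,t)(1-\epsilon)+u_b(\mu,t)\epsilon\ \ge\ \mathrm{EVaR}_\alpha(-R)\right]\ge\gamma. \]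
   Context: System setting: $\dot x = f(x,u)+\xi$, $x\in\mathcal{X}\subset\mathbb{R}^n$, $u=U(x,\theta)\in\mathcal{U}\subset\mathbb{R}^m$, $\theta\in\Theta\subset\mathbb{R}^p$ a parameter fixed along a trajectory, and $\xi$ stochastic noise with unknown distribution $\pi_\xi(x,u,t)$. $x^\theta$ denotes the resulting closed-loop state signal in $\mathcal{S}=\{s:\mathbb{R}_{\ge0}\to\mathbb{R}^n\}$ from an initial condition $x_0\in\mathcal{X}_0\subseteq\mathcal{X}$. A robustness metric is a function $\rho:\mathcal{S}\to[-a,b]$ with $a,b>0$ such that $\rho(s)\ge0$ only for signals exhibiting desired properties. The holistic system robustness $R$ is the scalar random variable whose samples are $r=\rho(x^\theta)$, where $(x_0,\theta)$ is sampled uniformly from $\mathcal{X}_0\times\Theta$. $\mathrm{EVaR}_\alpha(Z)=\inf_{z>0}\frac1z\ln\left(\frac{\mathbb{E}[e^{zZ}]}{\alpha}\right)$. $\zeta^*_N(\mu,t)$ is the solution of $\min_\zeta\zeta$ s.t. $\zeta\ge L(-r_i,\mu,t)$ for all $i$; $\mathbb{P}^N_{\pi_R}$ is the $N$-fold product measure of the i.i.d. sample. *)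

From HB Require Import structures.
From mathcomp Require Import all_boot all_order all_algebra.
From mathcomp Require Import all_classical all_reals all_analysis.
Set Implicit Arguments. Unset Strict Implicit. Unset Printing Implicit Defensive.
Import Order.TTheory GRing.Theory Num.Theory.
Local Open Scope classical_set_scope.
Local Open Scope ring_scope.

(* Mutual independence of a finite family of real random variables:
   product rule for all families of Borel sets (taking B i = setT covers
   every subfamily). *)
Definition mutually_independent d (T : measurableType d) (R : realType)
  (P : probability T R) (N : nat) (X : 'I_N -> T -> R) : Prop :=
  forall B : 'I_N -> set R, (forall i, measurable (B i)) ->
    fine (P (\bigcap_(i in [set: 'I_N]) (X i @^-1` B i))) =
    \prod_(i < N) fine (P (X i @^-1` B i)).

Definition EVaR d (T : measurableType d) (R : realType)
  (P : probability T R) (Z : T -> R) (alpha : R) : R :=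
  inf [set z^-1 * ln (Rintegral P setT (fun w => expR (z * Z w)) / alpha)
      | z in `]0, +oo[%classic].

Definition Lfun (R : realType) (alpha x mu t : R) : R :=
  t * (mu + expR (x / t - mu - ln alpha - 1)).

(* zeta*_N(mu,t) = max_{k} L(-r_k, mu, t) (the sup of a finite nonempty set
   is its maximum; for N = 0 the value is irrelevant). *)
Definition zetaN (R : realType) (N : nat) (alpha : R) (r : 'I_N -> R)
  (mu t : R) : R :=
  sup [set Lfun alpha (- r k) mu t | k in [set: 'I_N]].

Definition rstarE (R : realType) (N : nat) (alpha eps a : R) (r : 'I_N -> R)
  : R :=
  inf [set y | exists mu t, 0 < t /\
        y = zetaN alpha r mu t * (1 - eps) + Lfun alpha a mu t * eps].

(* For every t > 0 the entropic value at risk satisfies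
   EVaR_alpha(Z) <= t ln (E[e^(Z/t)] / alpha), and the tangent-line bound
   ln y <= mu + y e^(-mu-1) turns the right-hand side into
   t (mu + E[e^(Z/t - mu - ln alpha - 1)]), the expectation of L(Z, mu, t).
   Let s be an eps-quantile of R: P(R < s) <= eps and P(R > s) <= 1 - eps.
   Since -R <= a almost surely, e^(-R/t) is at most e^(a/t) on {R < s} and at
   most e^(-s/t) elsewhere, hence EVaR_alpha(-R) <= psi(s), where psi(s) is the
   infimum over mu and t > 0 of L(-s, mu, t)(1 - eps) + L(a, mu, t) eps.
   As L is increasing in its first argument, zeta*_N = L(-min_k r_k) and
   r*_E = psi(min_k r_k), with psi nonincreasing; so r*_E >= EVaR_alpha(-R) as
   soon as one sample is at most s.  By independence, all N samples exceed s
   with probability P(R > s)^N <= (1 - eps)^N <= 1 - gamma. *)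

From Pilot Require Import Defs.
From HB Require Import structures.
From mathcomp Require Import all_boot all_order all_algebra.
From mathcomp Require Import all_classical all_reals all_analysis.
From mathcomp Require Import measurable_realfun.
From mathcomp Require Import ring lra.

Set Implicit Arguments.
Unset Strict Implicit.
Unset Printing Implicit Defensive.
Import Order.TTheory GRing.Theory Num.Theory.
Local Open Scope classical_set_scope.
Local Open Scope ring_scope.

Lemma ln_le_tangent (R : realType) (y c : R) :
  0 < y -> ln y <= c + y * expR (- c - 1).
Proof.
move=> y0; have := expR_ge1Dx (ln y - c - 1).
have -> : ln y - c - 1 = ln y + (- c - 1) by ring.
rewrite expRD lnK ?posrE//; lra.
Qed.

(* [Defs.Lfun] is qualified because [Lfun] also names the L^p spaces of
   mathcomp-analysis. *)
Section robust_objective.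
Variables (R : realType) (alpha : R).
Hypothesis alpha01 : 0 < alpha <= 1.

Lemma ler_Lfun x y mu t : 0 < t -> x <= y ->
  Defs.Lfun alpha x mu t <= Defs.Lfun alpha y mu t.
Proof.
by move=> t0 xy; rewrite ler_pM2l// lerD2l ler_expR !lerD2r ler_pM2r ?invr_gt0.
Qed.

Lemma Lfun_ge x mu t : 0 < t -> x <= Defs.Lfun alpha x mu t.
Proof.
move=> t0; have lnalpha : ln alpha <= 0 by apply: ln_le0; case/andP: alpha01.
have tlnalpha : t * ln alpha <= 0 by rewrite mulr_ge0_le0// ltW.
apply: (@le_trans _ _ (x - t * ln alpha)); first lra.
have -> : x - t * ln alpha = t * (mu + (1 + (x / t - mu - ln alpha - 1))).
  by field; rewrite gt_eqF.
by rewrite ler_pM2l// lerD2l expR_ge1Dx.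
Qed.

Lemma zetaN_argmin n (r : 'I_n -> R) k mu t : 0 < t -> (forall i, r k <= r i) ->
  zetaN alpha r mu t = Defs.Lfun alpha (- r k) mu t.
Proof.
move=> t0 rk; rewrite /zetaN; set Lk := Defs.Lfun alpha (- r k) mu t.
have ubE : ubound [set Defs.Lfun alpha (- r i) mu t | i in [set: 'I_n]] Lk.
  by move=> _ [i _ <-]; apply: ler_Lfun; rewrite // lerN2.
apply/le_anti/andP; split; first by apply: ge_sup ubE; exists Lk, k.
by apply: ub_le_sup; [exists Lk | exists k].
Qed.

Variables (eps a : R).
Hypothesis eps01 : 0 < eps < 1.

Definition rstar_obj s mu t :=
  Defs.Lfun alpha (- s) mu t * (1 - eps) + Defs.Lfun alpha a mu t * eps.

(* psi of the proof sketch: r*_E of a sample whose minimum is [s]. *)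
Definition rstar s := inf [set y | exists mu t, 0 < t /\ y = rstar_obj s mu t].

Lemma ln_mix_le_rstar_obj s mu t : 0 < t ->
  t * ln ((expR (t^-1 * - s) * (1 - eps) + expR (t^-1 * a) * eps) / alpha)
  <= rstar_obj s mu t.
Proof.
move=> t0; case/andP: alpha01 => alpha0 _; case/andP: eps01 => eps0 eps1.
set B := _ + _.
have B0 : 0 < B by rewrite addr_gt0// mulr_gt0 ?expR_gt0 ?subr_gt0.
have Lfun_expR x : Defs.Lfun alpha x mu t =
    t * (mu + expR (t^-1 * x) / alpha * expR (- mu - 1)).
  rewrite /Defs.Lfun.
  have -> : x / t - mu - ln alpha - 1 = t^-1 * x + - ln alpha + (- mu - 1).
    by rewrite mulrC; ring.
  by rewrite !expRD expRN lnK ?posrE.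
have -> : rstar_obj s mu t = t * (mu + B / alpha * expR (- mu - 1)).
  by rewrite /rstar_obj !Lfun_expR /B; ring.
by rewrite ler_pM2l// ln_le_tangent// divr_gt0.
Qed.

Lemma rstar_obj_ge s mu t : 0 < t -> - s * (1 - eps) + a * eps <= rstar_obj s mu t.
Proof.
case/andP: eps01 => eps0 eps1 t0.
by rewrite lerD// ler_wpM2r ?Lfun_ge// ?subr_ge0 ltW.
Qed.

Lemma rstar_le s mu t : 0 < t -> rstar s <= rstar_obj s mu t.
Proof.
move=> t0; apply: ge_inf; last by exists mu, t.
by exists (- s * (1 - eps) + a * eps) => _ [mu' [t' [t'0 ->]]]; exact: rstar_obj_ge.
Qed.

Lemma rstar_ge c s : (forall mu t, 0 < t -> c <= rstar_obj s mu t) -> c <= rstar s.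
Proof.
move=> hc; apply: lb_le_inf; first by exists (rstar_obj s 0 1), 0, 1.
by move=> _ [mu [t [t0 ->]]]; exact: hc.
Qed.

Lemma rstar_nonincreasing : {homo rstar : s s' / s <= s' >-> s' <= s}.
Proof.
move=> s s' ss'; apply: rstar_ge => mu t t0.
apply: le_trans (rstar_le s' mu t0) _; case/andP: eps01 => _ eps1.
rewrite lerD2r ler_wpM2r ?subr_ge0 ?(ltW eps1)//.
by apply: ler_Lfun; rewrite // lerN2.
Qed.

Lemma rstarE_argmin n (r : 'I_n -> R) k : (forall i, r k <= r i) ->
  rstarE alpha eps a r = rstar (r k).
Proof.
move=> rk; rewrite /rstarE /rstar; congr inf.
by apply/seteqP; split=> _ [mu [t [t0 ->]]]; exists mu, t;
  rewrite (zetaN_argmin mu t0 rk).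
Qed.

Lemma le_rstarE n (r : 'I_n.+1 -> R) c :
  c <= rstarE alpha eps a r <-> exists i, c <= rstar (r i).
Proof.
have [k _ rk] := @arg_minP _ _ _ ord0 xpredT r isT.
rewrite (@rstarE_argmin _ _ k) => [|i]; last exact: rk.
split=> [ck|[i ci]]; first by exists k.
by apply: le_trans ci _; apply: rstar_nonincreasing; exact: rk.
Qed.

End robust_objective.

Lemma downset_measurable (R : realType) (U : set R) :
  (forall x y, x <= y -> U y -> U x) -> measurable U.
Proof.
move=> dU; apply: is_interval_measurable => x y _ Uy z /andP[_ zy]; exact: dU zy Uy.
Qed.

Lemma itvNyoEbigcup (R : realType) (x : R) :
  `]-oo, x[%classic = \bigcup_k `]-oo, x - k.+1%:R^-1[%classic.
Proof.
apply/seteqP; split=> [y|y [k _]] /=; rewrite !in_itv /=.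
  by move=> /ltr_add_invr[k yk]; exists k => //=; rewrite in_itv /= ltrBrDr.
by move=> /lt_le_trans; apply; rewrite gerBl invr_ge0.
Qed.

Lemma nondecreasing_bigcup_measure_le d (T : measurableType d) (R : realType)
  (mu : {measure set T -> \bar R}) (F : (set T)^nat) (c : \bar R) :
  (forall n, measurable (F n)) -> nondecreasing_seq F ->
  (forall n, mu (F n) <= c)%E -> (mu (\bigcup_n F n) <= c)%E.
Proof.
move=> mF ndF Fc.
have muF := @nondecreasing_cvg_mu _ _ R mu F mF (bigcupT_measurable _ mF) ndF.
rewrite -(cvg_lim (@ereal_hausdorff R) muF).
by apply: lime_le; [apply/cvg_ex; eexists; exact: muF | exact: nearW].
Qed.

Section probability_bounds.
Context d (T : measurableType d) (R : realType) (P : probability T R).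

Lemma prob1_ae (D : set T) (Q : T -> Prop) : measurable D -> P D = 1%E ->
  (forall x, D x -> Q x) -> {ae P, forall x, Q x}.
Proof.
move=> mD PD DQ; exists (~` D); split.
- exact: measurableC.
- by rewrite probability_setC// PD subee.
- by move=> x /= nQx Dx; exact: nQx (DQ x Dx).
Qed.

Lemma expectation_ge_cst (D : set T) (g : T -> R) (c : R) :
  measurable D -> P D = 1%E -> measurable_fun setT g ->
  (forall x, 0 <= g x) -> 0 <= c -> (forall x, D x -> c <= g x) ->
  (c%:E <= 'E_P[g])%E.
Proof.
move=> mD PD mg g0 c0 cg; rewrite -(expectation_cst P).
by apply: expectation_le => //; exact: prob1_ae cg.
Qed.

Lemma expectation_le_two_level (D A : set T) (g : T -> R) (c1 c2 eps : R) :
  measurable D -> measurable A -> P D = 1%E -> measurable_fun setT g ->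
  (forall x, 0 <= g x) -> 0 <= c2 <= c1 -> (P A <= eps%:E)%E ->
  (forall x, D x -> A x -> g x <= c1) -> (forall x, D x -> ~ A x -> g x <= c2) ->
  ('E_P[g] <= (c2 * (1 - eps) + c1 * eps)%:E)%E.
Proof.
move=> mD mA PD mg g0 /andP[c20 c21] PA gA gnA.
pose h := cst c2 \+ (c1 - c2) \o* \1_A.
have h_indic x : h x = if x \in A then c1 else c2.
  by rewrite /h /= indicE; case: ifP => _; rewrite ?mul1r ?mul0r ?addr0// addrC subrK.
have Eh : 'E_P[h]%E = (c2 + (c1 - c2) * fine (P A))%:E.
  rewrite expectationD ?Lfun_cst//; last first.
    by apply: Lfun_scale => //; apply/Lfun1_integrable; exact: integrable_indic.
  rewrite expectation_cst expectationZl ?expectation_indic//; last first.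
    by apply/Lfun1_integrable; exact: integrable_indic.
  by rewrite -[P A]fineK ?fin_num_measure.
apply: (@le_trans _ _ 'E_P[h]%E).
  apply: expectation_le => //.
  - apply: measurable_funD => //.
    by apply: measurable_funM => //; exact: measurable_indic.
  - by move=> x; rewrite h_indic; case: ifP => // _; exact: le_trans c21.
  - apply: (prob1_ae mD PD) => x Dx; rewrite h_indic.
    by case: ifPn => [/set_mem|/negP nA]; [exact: gA | apply: gnA => // /mem_set].
rewrite Eh lee_fin.
have : fine (P A) <= eps by rewrite -lee_fin fineK ?fin_num_measure.
nra.
Qed.

Section quantile.
Variables (X : {mfun T >-> R}) (a b eps : R).
Hypotheses (eps01 : 0 < eps < 1) (PX : P (X @^-1` `[- a, b]) = 1%E).

Let V := [set s | (P (X @^-1` `]-oo, s[) <= eps%:E)%E].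

Definition quantile := sup V.

Lemma le_prob_lt x y : x <= y ->
  (P (X @^-1` `]-oo, x[) <= P (X @^-1` `]-oo, y[))%E.
Proof.
move=> xy; apply: le_measure; rewrite ?inE; try exact: measurable_funPTI.
by move=> w /=; rewrite !in_itv /= => /lt_le_trans; apply.
Qed.

Let VNa : V (- a).
Proof.
have mD : measurable (X @^-1` `[- a, b]) by exact: measurable_funPTI.
rewrite /V /= (@le_trans _ _ (P (~` (X @^-1` `[- a, b]))))//.
  apply: le_measure; rewrite ?inE; [exact: measurable_funPTI | exact: measurableC |].
  by move=> w /=; rewrite !in_itv /= => wa /andP[aw _]; move: wa; rewrite ltNge aw.
by rewrite probability_setC// PX subee// lee_fin; case/andP: eps01 => /ltW.
Qed.

Let V_ub : ubound V b.
Proof.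
move=> s Vs; rewrite leNgt; apply/negP => bs; move: Vs; apply/negP; rewrite -ltNge.
apply: (@lt_le_trans _ _ (P (X @^-1` `[- a, b]))).
  by rewrite PX lte_fin; case/andP: eps01.
apply: le_measure; rewrite ?inE; try exact: measurable_funPTI.
by move=> w /=; rewrite !in_itv /= => /andP[_ /le_lt_trans]; apply.
Qed.

Let V_has_sup : has_sup V.
Proof. by split; [exists (- a) | exists b]. Qed.

Lemma quantile_ge : - a <= quantile.
Proof. exact: (ub_le_sup (proj2 V_has_sup) VNa). Qed.

Lemma prob_lt_quantile : (P (X @^-1` `]-oo, quantile[) <= eps%:E)%E.
Proof.
rewrite itvNyoEbigcup preimage_bigcup; apply: nondecreasing_bigcup_measure_le.
- by move=> k; exact: measurable_funPTI.
- apply/nondecreasing_seqP => k; apply/subsetPset => w /=.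
  rewrite !in_itv /= => /lt_le_trans; apply.
  by rewrite lerD2l lerN2 lef_pV2 ?posrE// ler_nat.
- move=> k; have : quantile - k.+1%:R^-1 < quantile.
    by rewrite ltrBlDr ltrDl invr_gt0.
  move=> /(sup_gt (proj1 V_has_sup))[v Vv kv].
  exact: le_trans (le_prob_lt (ltW kv)) Vv.
Qed.

Lemma prob_gt_quantile : (P (X @^-1` `]quantile, +oo[) <= (1 - eps)%:E)%E.
Proof.
rewrite itvoyEbigcup preimage_bigcup; apply: nondecreasing_bigcup_measure_le.
- by move=> k; exact: measurable_funPTI.
- apply/nondecreasing_seqP => k; apply/subsetPset => w /=.
  rewrite !in_itv /= !andbT; apply: le_trans.
  by rewrite lerD2l lef_pV2 ?posrE// ler_nat.
- move=> k; set x := quantile + k.+1%:R^-1.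
  change (P (X @^-1` `[x, +oo[) <= (1 - eps)%:E)%E.
  have nVx : (eps%:E < P (X @^-1` `]-oo, x[))%E.
    rewrite ltNge; apply/negP => Vx; have := ub_le_sup (proj2 V_has_sup) Vx.
    by rewrite /x gerDl leNgt invr_gt0 ltr0Sn.
  have mx : measurable (X @^-1` `]-oo, x[) by exact: measurable_funPTI.
  rewrite -setCitvl -preimage_setC probability_setC//.
  move: nVx; rewrite -[P _]fineK ?fin_num_measure//.
  by rewrite -EFinB !lte_fin lee_fin; lra.
Qed.

End quantile.

Section EVaR_bound.
Variables (X : {mfun T >-> R}) (a b alpha : R).
Hypotheses (PX : P (X @^-1` `[- a, b]) = 1%E) (alpha01 : 0 < alpha <= 1).

Let mexpR z : measurable_fun setT (fun w => expR (z * - X w)).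
Proof.
apply: measurableT_comp => //; apply: measurable_funM => //.
exact: measurableT_comp.
Qed.

Lemma Rintegral_expR_bounds z s eps : 0 <= z -> - a <= s ->
  (P (X @^-1` `]-oo, s[) <= eps%:E)%E ->
  expR (- (z * b)) <= Rintegral P setT (fun w => expR (z * - X w))
    <= expR (z * - s) * (1 - eps) + expR (z * a) * eps.
Proof.
move=> z0 sa Ps.
have mD : measurable (X @^-1` `[- a, b]) by exact: measurable_funPTI.
have mA : measurable (X @^-1` `]-oo, s[) by exact: measurable_funPTI.
have expR0 w : 0 <= expR (z * - X w) by exact/ltW/expR_gt0.
have lo := expectation_ge_cst mD PX (mexpR z) expR0 (ltW (expR_gt0 (- (z * b)))).
have up := expectation_le_two_level (c1 := expR (z * a)) (c2 := expR (z * - s))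
  mD mA PX (mexpR z) expR0.
have {}lo : ((expR (- (z * b)))%:E <= 'E_P[fun w => expR (z * - X w)])%E.
  apply: lo => w /=; rewrite in_itv /= => /andP[_ Xb].
  by rewrite ler_expR -mulrN ler_wpM2l// lerN2.
have {}up : ('E_P[fun w => expR (z * - X w)] <=
    (expR (z * - s) * (1 - eps) + expR (z * a) * eps)%:E)%E.
  apply: up => //.
  - by rewrite ltW ?expR_gt0// ler_expR ler_wpM2l// lerNl.
  - move=> w /=; rewrite in_itv /= => /andP[aX _] _.
    by rewrite ler_expR ler_wpM2l// lerNl.
  - move=> w _; rewrite /= in_itv /= => /negP; rewrite -leNgt => sX.
    by rewrite ler_expR ler_wpM2l// lerN2.
have fin_E : ('E_P[fun w => expR (z * - X w)] \is a fin_num)%E.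
  by rewrite fin_numElt (lt_le_trans _ lo) ?ltNyr// (le_lt_trans up) ?ltry.
have -> : Rintegral P setT (fun w => expR (z * - X w)) =
    fine 'E_P[fun w => expR (z * - X w)]%E by rewrite unlock.
by apply/andP; split; rewrite -lee_fin fineK.
Qed.

(* Without a lower bound, [inf] in the definition of [EVaR] is a junk value. *)
Lemma EVaR_set_lbound : lbound [set z^-1 * ln (Rintegral P setT
  (fun w => expR (z * - X w)) / alpha) | z in `]0, +oo[%classic] (- b).
Proof.
case/andP: alpha01 => alpha0 alpha1 y [z]; rewrite /= in_itv /= andbT => z0 <-.
have PXa : (P (X @^-1` `]-oo, (- a)%R[) <= 1%:E)%E.
  by apply: probability_le1; exact: measurable_funPTI.
have /andP[lo _] := Rintegral_expR_bounds (ltW z0) (lexx (- a)) PXa.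
set J := Rintegral _ _ _ in lo *.
have J0 : 0 < J := lt_le_trans (expR_gt0 _) lo.
have : - (z * b) <= ln (J / alpha).
  rewrite -[leLHS]expRK ler_ln ?posrE ?expR_gt0 ?divr_gt0//.
  by apply: le_trans lo _; rewrite ler_pdivlMr// ler_piMr// ltW.
by move=> h; rewrite -(ler_pM2l z0) mulrA mulfV ?gt_eqF// mul1r mulrN.
Qed.

Lemma EVaR_le_rstar_obj eps s mu t : 0 < eps < 1 -> 0 < t -> - a <= s ->
  (P (X @^-1` `]-oo, s[) <= eps%:E)%E ->
  EVaR P (fun w => - X w) alpha <= rstar_obj alpha eps a s mu t.
Proof.
move=> eps01 t0 sa Ps; have t'0 : 0 < t^-1 by rewrite invr_gt0.
have /andP[lo up] := Rintegral_expR_bounds (ltW t'0) sa Ps.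
set J := Rintegral _ _ _ in lo up.
have EVt : EVaR P (fun w => - X w) alpha <= t * ln (J / alpha).
  rewrite -[t in t * _]invrK; apply: ge_inf.
    by exists (- b); exact: EVaR_set_lbound.
  by exists t^-1; rewrite //= in_itv /= andbT.
apply: le_trans EVt (le_trans _ (ln_mix_le_rstar_obj alpha01 a eps01 s mu t0)).
have J0 : 0 < J := lt_le_trans (expR_gt0 _) lo.
case/andP: alpha01 => alpha0 _.
rewrite ler_pM2l// ler_ln ?posrE ?divr_gt0 ?ler_pM2r ?invr_gt0//.
exact: lt_le_trans J0 up.
Qed.

End EVaR_bound.

Lemma le_prob_le_rstarE alpha eps a n (X : 'I_n.+1 -> {mfun T >-> R}) c s :
  0 < alpha <= 1 -> 0 < eps < 1 -> c <= rstar alpha eps a s ->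
  (P (~` \bigcap_(i in [set: 'I_n.+1]) X i @^-1` `]s, +oo[) <=
   P [set w | (c <= rstarE alpha eps a (fun k => X k w))%R])%E.
Proof.
move=> alpha01 eps01 cs; apply: le_measure; rewrite ?inE.
- apply: measurableC; apply: fin_bigcap_measurable => // i _.
  exact: measurable_funPTI.
- have -> : [set w | c <= rstarE alpha eps a (fun k => X k w)] =
      \bigcup_(i in [set: 'I_n.+1]) X i @^-1` [set x | c <= rstar alpha eps a x].
    by apply/seteqP; split=> w /=; rewrite (le_rstarE alpha01 a eps01);
      move=> -[i]; exists i.
  apply: fin_bigcup_measurable => // i _; apply: measurable_funPTI.
  by apply: downset_measurable => x y xy /le_trans; apply; exact: rstar_nonincreasing.
- move=> w /= /existsNP[i /not_implyP[_]]; rewrite /= in_itv /= andbT => /negP.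
  rewrite -leNgt => Xis; apply/(le_rstarE alpha01 a eps01); exists i.
  exact: le_trans cs (rstar_nonincreasing alpha01 a eps01 Xis).
Qed.

Lemma prob_bigcap_iid n (X : 'I_n -> {RV P >-> R}) (Y : {RV P >-> R}) (B : set R) :
  measurable B -> mutually_independent P (fun i => X i : T -> R) ->
  (forall i, distribution P (X i) = distribution P Y) ->
  fine (P (\bigcap_(i in [set: 'I_n]) X i @^-1` B)) = fine (P (Y @^-1` B)) ^+ n.
Proof.
move=> mB indep XY; rewrite (indep (fun=> B))//.
rewrite (eq_bigr (fun=> fine (P (Y @^-1` B)))) ?prodr_const ?card_ord// => i _.
by have := congr1 (fun m => m B) (XY i); rewrite /distribution /pushforward /= => ->.
Qed.

End probability_bounds.

Lemma expr_le_ln_ratio (R : realType) (eps gamma : R) (N : nat) :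
  0 < eps < 1 -> 0 <= gamma < 1 ->
  ln (1 - gamma) / ln (1 - eps) <= N%:R -> (1 - eps) ^+ N <= 1 - gamma.
Proof.
move=> /andP[eps0 eps1] /andP[gamma0 gamma1] HN.
have ln_eps : ln (1 - eps) < 0 by apply: ln_lt0; apply/andP; split; lra.
have lnN : N%:R * ln (1 - eps) <= ln (1 - gamma).
  by move: HN; rewrite ler_ndivrMr.
by rewrite -ler_ln ?posrE ?exprn_gt0 ?subr_gt0// lnXn ?subr_gt0// -mulr_natl.
Qed.

Theorem corollary8 (R : realType) (d : measure_display) (T : measurableType d)
  (P : probability T R) (a b : R) (Rv : {RV P >-> R})
  (eps gamma alpha : R) (N : nat) (r : 'I_N -> {RV P >-> R}) :
  0 < a -> 0 < b ->
  P (Rv @^-1` `[- a, b]) = 1%E ->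
  0 < eps < 1 -> 0 <= gamma < 1 -> 0 < alpha <= 1 ->
  (forall i, distribution P (r i) = distribution P Rv) ->
  mutually_independent P (fun i => (r i : T -> R)) ->
  ln (1 - gamma) / ln (1 - eps) <= N%:R ->
  (gamma%:E <= P [set w | (EVaR P (fun w' => - Rv w') alpha <=
                          rstarE alpha eps a (fun k => r k w))%R])%E.
Proof.
move=> _ _ PRv eps01 gamma01 alpha01 r_distr r_indep HN.
have := expr_le_ln_ratio eps01 gamma01 HN.
case: N r r_distr r_indep {HN} => [|n] r r_distr r_indep powN.
  by rewrite (@le_trans _ _ 0%E)// lee_fin; move: powN gamma01; rewrite expr0; lra.
set s := quantile P Rv eps.
have EVs : EVaR P (fun w => - Rv w) alpha <= rstar alpha eps a s.
  apply: rstar_ge => mu t t0; apply: (EVaR_le_rstar_obj PRv alpha01 mu eps01 t0).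
  - exact: quantile_ge eps01 PRv.
  - exact: prob_lt_quantile eps01 PRv.
apply: le_trans (le_prob_le_rstarE P r alpha01 eps01 EVs).
have mgt : measurable (Rv @^-1` `]s, +oo[) by exact: measurable_funPTI.
have mC : measurable (\bigcap_(i in [set: 'I_n.+1]) r i @^-1` `]s, +oo[).
  by apply: fin_bigcap_measurable => // i _; exact: measurable_funPTI.
rewrite probability_setC// -[P _]fineK ?fin_num_measure//.
rewrite (prob_bigcap_iid _ r_indep r_distr)//.
have q1 : fine (P (Rv @^-1` `]s, +oo[)) <= 1 - eps.
  by rewrite -lee_fin fineK ?fin_num_measure//; exact: prob_gt_quantile eps01 PRv.
have q0 := fine_ge0 (measure_ge0 P (Rv @^-1` `]s, +oo[)).
have : fine (P (Rv @^-1` `]s, +oo[)) ^+ n.+1 <= (1 - eps) ^+ n.+1.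
  by rewrite lerXn2r ?nnegrE//; case/andP: eps01 => _; lra.
rewrite -EFinB lee_fin; lra.
Qed.
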